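(* For each $q\ge3$ (uniformly in $\xi_\infty\in[0,2\pi)$), $$\xi_q(\varphi_\infty(\xi_\infty))-\xi_\infty=O_{e_0,c}(1/q^2)\qquad\text{and}\qquad k_q-e_0=O_{e_0,c}(1/q^2),$$ where $O_{e_0,c}(X)$ denotes a quantity bounded in absolute value by $X$ times a constant depending only on $e_0$ and $c$.
   Context: Ellipse with semi-axes $0<b\le a$, eccentricity $e_0=\sqrt{1-b^2/a^2}\in[0,1)$, semi-focal distance $c=\sqrt{a^2-b^2}$. For $0\le k<1$, $F(\varphi;k)=\int_0^\varphi(1-k^2\sin^2\tau)^{-1/2}d\tau$, $K(k)=F(\pi/2;k)$, and $\mathrm{am}(\cdot;k)$ is the inverse function of $F(\cdot;k)$ (Jacobi amplitude). For $\lambda\in(0,b)$, $k_\lambda=\sqrt{(a^2-b^2)/(a^2-\lambda^2)}$, $\omega_\lambda=F(\arcsin(\lambda/b);k_\lambda)/(2K(k_\lambda))$ (strictly increasing from $0$ to $1/2$); for $q\ge3$, $\omega_{\lambda_q}=1/q$ and $k_q=k_{\lambda_q}$. Define $\xi_q(\varphi)=\frac{2\pi}{4K(k_q)}F(\varphi;k_q)$ and $\varphi_\infty(\xi)=\mathrm{am}\big(\frac{4K(e_0)}{2\pi}\xi;e_0\big)$. *)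

From Stdlib Require Import Reals Lra ClassicalEpsilon.
From Coquelicot Require Import Coquelicot.
Open Scope R_scope.

Definition ellF (phi k : R) : R :=
  RInt (fun t => / sqrt (1 - k ^ 2 * sin t ^ 2)) 0 phi.

Definition ellK (k : R) : R := ellF (PI / 2) k.

(* Jacobi amplitude am(u;k): the inverse function of F(.;k)
   (the unique phi with F(phi;k) = u, which exists for 0 <= k < 1). *)
Definition am (u k : R) : R :=
  epsilon (inhabits 0) (fun phi => ellF phi k = u).

(* Ellipse data, for semi-axes 0 < b <= a. *)
Definition ecc (a b : R) : R := sqrt (1 - b ^ 2 / a ^ 2).
Definition semifocal (a b : R) : R := sqrt (a ^ 2 - b ^ 2).

Definition k_lam (a b lam : R) : R := sqrt ((a ^ 2 - b ^ 2) / (a ^ 2 - lam ^ 2)).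
Definition omega_lam (a b lam : R) : R :=
  ellF (asin (lam / b)) (k_lam a b lam) / (2 * ellK (k_lam a b lam)).

(* lambda_q: the (unique, omega being strictly increasing from 0 to 1/2)
   lambda in (0,b) with omega_lambda = 1/q, for q >= 3. *)
Definition lam_q (a b : R) (q : nat) : R :=
  epsilon (inhabits 0) (fun lam => 0 < lam < b /\ omega_lam a b lam = 1 / INR q).

Definition k_q (a b : R) (q : nat) : R := k_lam a b (lam_q a b q).

Definition xi_q (a b : R) (q : nat) (phi : R) : R :=
  2 * PI / (4 * ellK (k_q a b q)) * ellF phi (k_q a b q).

Definition phi_inf (a b : R) (xi : R) : R :=
  am (4 * ellK (ecc a b) / (2 * PI) * xi) (ecc a b).

From Stdlib Require Import Reals Lra ClassicalEpsilon.
From Coquelicot Require Import Coquelicot.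
Open Scope R_scope.

(* Fix 0 < b < a and write lambda = b sin p. As long as cos p stays above a threshold delta,
   the modulus k_lambda stays at distance m > 0 from 1, where F and K are Lipschitz in both
   arguments. Before cos p drops to delta, omega already exceeds 1/3 >= 1/q, because F(p;k)
   grows logarithmically as k -> 1 while K(k) - F(p;k) stays bounded. So lambda_q exists, its
   angle p_q lies in the good region, and p_q <= F(p_q;k_q) = 2 K(k_q) / q gives
   lambda_q <= b pi / (m q). Then k_q^2 - e0^2 = O(lambda_q^2) = O(1/q^2), and the Lipschitz
   bounds in the modulus turn this into |xi_q(phi_inf(xi)) - xi| = O(|k_q - e0|). The
   constant depends on (a, b), which (e0, c) determine when a > b; for a = b both errors are 0. *)

Lemma INR_ge_3 (q : nat) : (3 <= q)%nat -> 3 <= INR q.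
Proof. intros Hq. apply le_INR in Hq. simpl in Hq. lra. Qed.

Lemma sin_pow2_bound (t : R) : 0 <= sin t ^ 2 <= 1.
Proof. pose proof (SIN_bound t). split; nra. Qed.

Lemma le_sqrt_of_pow2_le (m x : R) : 0 < m -> m ^ 2 <= x -> m <= sqrt x.
Proof. intros. rewrite <- (sqrt_pow2 m) by lra. apply sqrt_le_1_alt. lra. Qed.

Lemma Rabs_inv_sqrt_sub (m A B : R) : 0 < m -> m ^ 2 <= A -> m ^ 2 <= B ->
  Rabs (/ sqrt A - / sqrt B) <= Rabs (A - B) / (2 * m ^ 3).
Proof.
  intros Hm HA HB.
  assert (Hx : m <= sqrt A) by (apply le_sqrt_of_pow2_le; auto).
  assert (Hy : m <= sqrt B) by (apply le_sqrt_of_pow2_le; auto).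
  rewrite <- (pow2_sqrt A) at 2 by nra. rewrite <- (pow2_sqrt B) at 2 by nra.
  set (x := sqrt A) in *. set (y := sqrt B) in *.
  assert (Hden : 2 * m ^ 3 <= x * y * (x + y)).
  { assert (m * m <= x * y) by nra. nra. }
  replace (/ x - / y) with ((x - y) * (x + y) * - / (x * y * (x + y))) by (field; lra).
  replace (x ^ 2 - y ^ 2) with ((x - y) * (x + y)) by ring.
  rewrite Rabs_mult, Rabs_Ropp, Rabs_inv, (Rabs_pos_eq (x * y * (x + y))) by nra.
  apply Rmult_le_compat_l. apply Rabs_pos.
  apply Rinv_le_contravar; [pose proof (pow_lt m 3 Hm); lra | exact Hden].
Qed.

Lemma continuity_pt_of_modulus (f rho : R -> R) (x0 : R) :
  continuity_pt rho x0 -> rho x0 = 0 ->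
  (forall x, Rabs (f x - f x0) <= rho x) -> continuity_pt f x0.
Proof.
  intros Hrho Hrho0 Hf eps Heps.
  destruct (Hrho eps Heps) as [alp [Halp H]]. exists alp. split; auto.
  intros x Hx. specialize (H x Hx). simpl in *. unfold R_dist in *.
  rewrite Hrho0, Rminus_0_r in H. pose proof (Hf x). pose proof (Rle_abs (rho x)). lra.
Qed.

Lemma continuity_pt_Rabs_sub (g : R -> R) (x0 : R) : continuity_pt g x0 ->
  continuity_pt (fun x => Rabs (g x - g x0)) x0.
Proof.
  intros Hg. apply (continuity_pt_comp (fun x => g x - g x0) Rabs).
  - apply continuity_pt_minus; auto. apply continuity_pt_const. intros u v; reflexivity.
  - apply Rcontinuity_abs.
Qed.

Definition clamp (lo hi x : R) : R := Rmax lo (Rmin hi x).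

Lemma clamp_bounds (lo hi x : R) : lo <= hi -> lo <= clamp lo hi x <= hi.
Proof. intros. unfold clamp, Rmax, Rmin. repeat destruct Rle_dec; lra. Qed.

Lemma clamp_id (lo hi x : R) : lo <= x <= hi -> clamp lo hi x = x.
Proof. intros. unfold clamp, Rmax, Rmin. repeat destruct Rle_dec; lra. Qed.

Lemma clamp_continuity (lo hi : R) : continuity (clamp lo hi).
Proof.
  intros x0. apply continuity_pt_of_modulus with (rho := fun x => Rabs (x - x0)).
  - apply (continuity_pt_Rabs_sub id), continuity_pt_id.
  - rewrite Rminus_diag, Rabs_R0. reflexivity.
  - intros x. unfold clamp, Rmax, Rmin.
    repeat destruct Rle_dec; unfold Rabs; repeat destruct Rcase_abs; lra.
Qed.

Lemma RInt_const_R (c x y : R) : RInt (fun _ => c) x y = c * (y - x).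
Proof. rewrite RInt_const. unfold scal; simpl. unfold mult; simpl. ring. Qed.

Definition ellF_integrand (k t : R) : R := / sqrt (1 - k ^ 2 * sin t ^ 2).

Lemma ellF_fold (phi k : R) : ellF phi k = RInt (ellF_integrand k) 0 phi.
Proof. reflexivity. Qed.

Lemma ellF_integrand_modulus_lipschitz (m k k' t : R) : 0 < m -> 0 <= k -> 0 <= k' ->
  k ^ 2 <= 1 - m ^ 2 -> k' ^ 2 <= 1 - m ^ 2 ->
  Rabs (ellF_integrand k t - ellF_integrand k' t) <= Rabs (k - k') / m ^ 3.
Proof.
  intros Hm Hk Hk' Hkm Hk'm. unfold ellF_integrand. pose proof (sin_pow2_bound t).
  eapply Rle_trans; [apply (Rabs_inv_sqrt_sub m); nra |].
  replace (1 - k ^ 2 * sin t ^ 2 - (1 - k' ^ 2 * sin t ^ 2))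
    with ((k' + k) * sin t ^ 2 * (k' - k)) by ring.
  rewrite Rabs_mult, (Rabs_minus_sym k'), (Rabs_pos_eq ((k' + k) * sin t ^ 2)) by nra.
  assert (k <= 1 /\ k' <= 1) as [Hk1 Hk'1] by (split; nra).
  assert (Hsum : (k' + k) * sin t ^ 2 <= 2) by nra.
  pose proof (Rabs_pos (k - k')).
  replace (Rabs (k - k') / m ^ 3) with (2 * Rabs (k - k') / (2 * m ^ 3)) by (field; lra).
  apply Rmult_le_compat_r; [| nra].
  apply Rlt_le, Rinv_0_lt_compat. pose proof (pow_lt m 3 Hm). lra.
Qed.

Lemma ellF_0 (k : R) : ellF 0 k = 0.
Proof. apply (RInt_point (V := R_CompleteNormedModule)). Qed.

Section BoundedModulus.

Variables k m : R.
Hypothesis m_pos : 0 < m.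
Hypothesis k_bound : k ^ 2 <= 1 - m ^ 2.

Lemma ellF_radicand_bounds (t : R) : m ^ 2 <= 1 - k ^ 2 * sin t ^ 2 <= 1.
Proof. pose proof (sin_pow2_bound t). assert (0 <= k ^ 2) by nra. split; nra. Qed.

Lemma ellF_integrand_bounds (t : R) : 1 <= ellF_integrand k t <= / m.
Proof.
  destruct (ellF_radicand_bounds t) as [Hlo Hhi]. unfold ellF_integrand.
  assert (Hs : m <= sqrt (1 - k ^ 2 * sin t ^ 2) <= 1).
  { split. now apply le_sqrt_of_pow2_le. rewrite <- sqrt_1 at 2. now apply sqrt_le_1_alt. }
  split.
  - rewrite <- Rinv_1 at 1. apply Rinv_le_contravar; lra.
  - apply Rinv_le_contravar; lra.
Qed.

Lemma ellF_integrand_continuous (t : R) : continuous (ellF_integrand k) t.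
Proof.
  apply (@ex_derive_continuous R_AbsRing R_NormedModule). unfold ellF_integrand.
  pose proof (ellF_radicand_bounds t). pose proof (pow_lt m 2 m_pos).
  auto_derive. repeat split; try lra. apply Rgt_not_eq, sqrt_lt_R0. lra.
Qed.

Lemma ex_RInt_ellF_integrand (x y : R) : ex_RInt (ellF_integrand k) x y.
Proof.
  apply (@ex_RInt_continuous R_CompleteNormedModule). intros. apply ellF_integrand_continuous.
Qed.

Lemma ellF_sub (x y : R) : ellF y k - ellF x k = RInt (ellF_integrand k) x y.
Proof.
  rewrite !ellF_fold, <- (RInt_Chasles (ellF_integrand k) 0 x y)
    by apply ex_RInt_ellF_integrand.
  unfold plus; simpl. ring.
Qed.

Lemma RInt_ellF_integrand_bounds (x y : R) : x <= y ->
  y - x <= RInt (ellF_integrand k) x y <= (y - x) / m.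
Proof.
  intros Hxy. split.
  - replace (y - x) with (RInt (fun _ => 1) x y) by (rewrite RInt_const_R; simpl; ring).
    apply RInt_le; auto. apply ex_RInt_const. apply ex_RInt_ellF_integrand.
    intros t _. apply ellF_integrand_bounds.
  - replace ((y - x) / m) with (RInt (fun _ => / m) x y)
      by (rewrite RInt_const_R; simpl; field; lra).
    apply RInt_le; auto. apply ex_RInt_ellF_integrand. apply ex_RInt_const.
    intros t _. apply ellF_integrand_bounds.
Qed.

Lemma ellF_sub_bounds (x y : R) : x <= y ->
  y - x <= ellF y k - ellF x k <= (y - x) / m.
Proof. intros. rewrite ellF_sub. now apply RInt_ellF_integrand_bounds. Qed.

Lemma ellF_lipschitz (x y : R) : Rabs (ellF y k - ellF x k) <= Rabs (y - x) / m.
Proof.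
  destruct (Rle_dec x y) as [Hxy | Hxy].
  - pose proof (ellF_sub_bounds x y Hxy). rewrite !Rabs_pos_eq; lra.
  - pose proof (ellF_sub_bounds y x ltac:(lra)).
    rewrite !Rabs_left1 by lra. unfold Rdiv. lra.
Qed.

Lemma ellF_bounds (phi : R) : 0 <= phi -> phi <= ellF phi k <= phi / m.
Proof. intros Hphi. pose proof (ellF_sub_bounds 0 phi Hphi) as H. rewrite ellF_0 in H. lra. Qed.

Lemma ellF_nonneg_inv (phi : R) : 0 <= ellF phi k -> 0 <= phi.
Proof.
  intros HF. destruct (Rle_dec 0 phi) as [| Hphi]; auto.
  pose proof (ellF_sub_bounds phi 0 ltac:(lra)) as H. rewrite ellF_0 in H. lra.
Qed.

Lemma ellK_bounds : PI / 2 <= ellK k <= PI / 2 / m.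
Proof. apply ellF_bounds. pose proof PI_RGT_0. lra. Qed.

Lemma ellF_continuity : continuity (fun phi => ellF phi k).
Proof.
  intros x0. apply continuity_pt_of_modulus with (rho := fun x => / m * Rabs (x - x0)).
  - apply (continuity_pt_scal (fun x => Rabs (x - x0))).
    apply (continuity_pt_Rabs_sub id), continuity_pt_id.
  - rewrite Rminus_diag, Rabs_R0. ring.
  - intros x. pose proof (ellF_lipschitz x0 x) as H. unfold Rdiv in H. lra.
Qed.

Lemma ellF_div_ellK_le (phi : R) : 0 <= phi -> ellF phi k / (2 * ellK k) <= phi / (m * PI).
Proof.
  intros Hphi. pose proof (ellF_bounds phi Hphi). pose proof ellK_bounds. pose proof PI_RGT_0.
  apply Rle_trans with (phi / m / (2 * ellK k)).
  - apply Rmult_le_compat_r; [apply Rlt_le, Rinv_0_lt_compat |]; lra.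
  - replace (phi / (m * PI)) with (phi / m / (2 * (PI / 2))) by (field; lra).
    apply Rmult_le_compat_l; [apply Rdiv_le_0_compat; lra |].
    apply Rinv_le_contravar; lra.
Qed.

End BoundedModulus.

Lemma ellF_modulus_lipschitz (m k k' phi : R) : 0 < m -> 0 <= k -> 0 <= k' ->
  k ^ 2 <= 1 - m ^ 2 -> k' ^ 2 <= 1 - m ^ 2 -> 0 <= phi ->
  Rabs (ellF phi k - ellF phi k') <= phi * (Rabs (k - k') / m ^ 3).
Proof.
  intros Hm Hk Hk' Hkm Hk'm Hphi. rewrite !ellF_fold.
  rewrite <- (RInt_minus (V := R_CompleteNormedModule))
    by now apply (ex_RInt_ellF_integrand _ m).
  replace phi with (phi - 0) at 2 by ring.
  apply abs_RInt_le_const; auto.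
  - apply (ex_RInt_minus (V := R_CompleteNormedModule)); now apply (ex_RInt_ellF_integrand _ m).
  - intros. now apply ellF_integrand_modulus_lipschitz.
Qed.

Lemma ellF_modulus0 (phi : R) : ellF phi 0 = phi.
Proof.
  rewrite ellF_fold, (RInt_ext _ (fun _ => 1)).
  - rewrite RInt_const_R. ring.
  - intros t _. unfold ellF_integrand.
    rewrite pow_ne_zero, Rmult_0_l, Rminus_0_r, sqrt_1, Rinv_1 by discriminate. reflexivity.
Qed.

Lemma ellF_am (m e u : R) : 0 < m -> e ^ 2 <= 1 - m ^ 2 -> ellF (am u e) e = u.
Proof.
  intros Hm He. apply (epsilon_spec (inhabits 0) (fun phi => ellF phi e = u)).
  pose proof (ellF_sub_bounds e m Hm He (- Rabs u) 0 ltac:(pose proof (Rabs_pos u); lra)).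
  pose proof (ellF_sub_bounds e m Hm He 0 (Rabs u) (Rabs_pos u)).
  rewrite ellF_0 in *.
  destruct (IVT_gen (fun x => ellF x e) (- Rabs u) (Rabs u) u (ellF_continuity e m Hm He))
    as [x [_ Hx]].
  - pose proof (Rle_abs u). pose proof (Rle_abs (- u)). rewrite Rabs_Ropp in *.
    split; [apply Rle_trans with (ellF (- Rabs u) e); [apply Rmin_l | lra]
           | apply Rle_trans with (ellF (Rabs u) e); [lra | apply Rmax_r]].
  - now exists x.
Qed.

Lemma scaled_ratio_sub_le (F1 u K1 K0 d m phi : R) :
  0 < m -> 0 <= phi <= u -> u <= 2 * PI / m -> PI / 2 <= K1 -> PI / 2 <= K0 -> 0 <= d ->
  Rabs (F1 - u) <= phi * (d / m ^ 3) -> Rabs (K1 - K0) <= PI / 2 * (d / m ^ 3) ->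
  Rabs (2 * PI / (4 * K1) * F1 - 2 * PI * u / (4 * K0)) <= 4 * PI / m ^ 4 * d.
Proof.
  intros Hm Hphi Hu HK1 HK0 Hd HF HK. pose proof PI_RGT_0 as Hpi.
  replace (2 * PI / (4 * K1) * F1 - 2 * PI * u / (4 * K0))
    with (PI / 2 * ((F1 - u) / K1 + u * ((K0 - K1) / (K1 * K0)))) by (field; lra).
  rewrite Rabs_mult, (Rabs_pos_eq (PI / 2)) by lra.
  set (D := d / m ^ 3) in *.
  assert (HD : 0 <= D) by (apply Rdiv_le_0_compat; [lra | apply pow_lt; lra]).
  assert (A1 : Rabs ((F1 - u) / K1) <= u * D / (PI / 2)).
  { unfold Rdiv. rewrite Rabs_mult, Rabs_inv, (Rabs_pos_eq K1) by lra.
    apply Rle_trans with (u * D * / K1).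
    - apply Rmult_le_compat_r; [apply Rlt_le, Rinv_0_lt_compat |]; nra.
    - apply Rmult_le_compat_l; [nra | apply Rinv_le_contravar; lra]. }
  assert (A2 : Rabs (u * ((K0 - K1) / (K1 * K0))) <= u * (PI / 2 * D) / (PI / 2 * (PI / 2))).
  { unfold Rdiv. rewrite !Rabs_mult, Rabs_inv, (Rabs_pos_eq u), (Rabs_pos_eq (K1 * K0)) by nra.
    rewrite Rabs_minus_sym, Rmult_assoc. apply Rmult_le_compat_l; [lra |].
    apply Rmult_le_compat; [apply Rabs_pos | apply Rlt_le, Rinv_0_lt_compat; nra | lra |].
    apply Rinv_le_contravar; nra. }
  pose proof (Rabs_triang ((F1 - u) / K1) (u * ((K0 - K1) / (K1 * K0)))).
  assert (u * D / (PI / 2) + u * (PI / 2 * D) / (PI / 2 * (PI / 2)) <= 8 * D / m).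
  { replace (u * D / (PI / 2) + u * (PI / 2 * D) / (PI / 2 * (PI / 2))) with (4 * D / PI * u)
      by (field; lra).
    apply Rle_trans with (4 * D / PI * (2 * PI / m)).
    - apply Rmult_le_compat_l; [apply Rdiv_le_0_compat |]; lra.
    - right. field. lra. }
  replace (4 * PI / m ^ 4 * d) with (PI / 2 * (8 * D / m)) by (unfold D; field; lra).
  apply Rmult_le_compat_l; lra.
Qed.

Lemma xi_error_le (k e m xi : R) : 0 < m -> 0 <= k -> 0 <= e ->
  k ^ 2 <= 1 - m ^ 2 -> e ^ 2 <= 1 - m ^ 2 -> 0 <= xi < 2 * PI ->
  Rabs (2 * PI / (4 * ellK k) * ellF (am (4 * ellK e / (2 * PI) * xi) e) k - xi)
    <= 4 * PI / m ^ 4 * Rabs (k - e).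
Proof.
  intros Hm Hk0 He0 Hk He Hxi. pose proof PI_RGT_0 as Hpi.
  pose proof (ellK_bounds e m Hm He) as HK0.
  set (u := 4 * ellK e / (2 * PI) * xi).
  assert (Hu : 0 <= u <= 2 * PI / m).
  { unfold u. split; [apply Rmult_le_pos; [apply Rdiv_le_0_compat |]; lra |].
    replace (2 * PI / m) with (4 * (PI / 2 / m) / (2 * PI) * (2 * PI)) by (field; lra).
    apply Rmult_le_compat; try lra; [apply Rdiv_le_0_compat; lra |].
    apply Rmult_le_compat_r; [apply Rlt_le, Rinv_0_lt_compat |]; lra. }
  pose proof (ellF_am m e u Hm He) as Hphi. set (phi := am u e) in *.
  assert (Hphi0 : 0 <= phi) by (apply (ellF_nonneg_inv e m Hm He); lra).
  assert (Hphiu : phi <= u) by (pose proof (ellF_bounds e m Hm He phi Hphi0); lra).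
  replace xi with (2 * PI * u / (4 * ellK e)) by (unfold u; field; lra).
  apply (scaled_ratio_sub_le _ u _ _ _ m phi); try lra.
  - apply (ellK_bounds k m Hm Hk).
  - apply Rabs_pos.
  - rewrite <- Hphi. now apply ellF_modulus_lipschitz.
  - apply ellF_modulus_lipschitz; auto; lra.
Qed.

Lemma continuity_pt_ellF_comp (m : R) (P g : R -> R) (x0 : R) : 0 < m ->
  (forall x, 0 <= P x /\ 0 <= g x /\ g x ^ 2 <= 1 - m ^ 2) ->
  continuity_pt P x0 -> continuity_pt g x0 ->
  continuity_pt (fun x => ellF (P x) (g x)) x0.
Proof.
  intros Hm Hbound HP Hg.
  destruct (Hbound x0) as [HP0 [Hg0 Hk0]].
  apply continuity_pt_of_modulus with
    (rho := fun x => / m * Rabs (P x - P x0) + (P x0 / m ^ 3) * Rabs (g x - g x0)).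
  - apply (continuity_pt_plus (fun x => / m * Rabs (P x - P x0))
             (fun x => (P x0 / m ^ 3) * Rabs (g x - g x0))).
    + apply (continuity_pt_scal (fun x => Rabs (P x - P x0))). now apply continuity_pt_Rabs_sub.
    + apply (continuity_pt_scal (fun x => Rabs (g x - g x0))). now apply continuity_pt_Rabs_sub.
  - rewrite !Rminus_diag, Rabs_R0. ring.
  - intros x. destruct (Hbound x) as [HPx [Hgx Hkx]].
    replace (ellF (P x) (g x) - ellF (P x0) (g x0)) with
      ((ellF (P x) (g x) - ellF (P x0) (g x)) + (ellF (P x0) (g x) - ellF (P x0) (g x0)))
      by ring.
    eapply Rle_trans; [apply Rabs_triang | apply Rplus_le_compat].
    + pose proof (ellF_lipschitz (g x) m Hm Hkx (P x0) (P x)) as H. unfold Rdiv in H. lra.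
    + pose proof (ellF_modulus_lipschitz m (g x) (g x0) (P x0) Hm Hgx Hg0 Hkx Hk0 HP0) as H.
      unfold Rdiv in H. lra.
Qed.

Lemma third_le_sin (x : R) : 0 <= x <= PI / 2 -> x / 3 <= sin x.
Proof.
  intros Hx. pose proof PI_4.
  assert (Hs : sin_lb x <= sin x) by (apply SIN; lra).
  replace (sin_lb x) with (x - x ^ 3 / 6 + x ^ 5 / 120 - x ^ 7 / 5040) in Hs
    by (unfold sin_lb, sin_approx, sin_term; simpl; field).
  assert (Hx2 : 0 <= x ^ 2 <= 4) by nra.
  assert (0 <= x ^ 5 * (42 - x ^ 2)) by (apply Rmult_le_pos; [apply pow_le | ]; lra).
  assert (0 <= x * (4 - x ^ 2)) by (apply Rmult_le_pos; lra).
  nra.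
Qed.

Lemma cos_le_PI2_sub (t : R) : 0 <= t <= PI / 2 -> 0 <= cos t <= PI / 2 - t.
Proof.
  intros Ht. split; [apply cos_ge_0; lra |].
  rewrite <- sin_shift. destruct (Req_dec t (PI / 2)) as [-> | Hne].
  - rewrite Rminus_diag, sin_0. lra.
  - left. apply sin_lt_x. lra.
Qed.

Lemma PI2_sub_le_3cos (p : R) : 0 <= p <= PI / 2 -> PI / 2 - p <= 3 * cos p.
Proof.
  intros Hp. rewrite <- sin_shift. pose proof (third_le_sin (PI / 2 - p) ltac:(lra)). lra.
Qed.

Lemma RInt_inv_sub (L p : R) : 0 <= p < L ->
  RInt (fun t => / (L - t)) 0 p = ln L - ln (L - p).
Proof.
  intros Hp. apply is_RInt_unique.
  replace (ln L - ln (L - p)) with (minus (- ln (L - p)) (- ln (L - 0)))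
    by (unfold minus, plus, opp; simpl; rewrite Rminus_0_r; ring).
  apply (is_RInt_derive (fun t => - ln (L - t))).
  - intros x Hx. rewrite Rmin_left, Rmax_right in Hx by lra.
    auto_derive; [lra | field; lra].
  - intros x Hx. rewrite Rmin_left, Rmax_right in Hx by lra.
    apply (@ex_derive_continuous R_AbsRing R_NormedModule). auto_derive. lra.
Qed.

(* [1 - k^2 sin^2 t <= E^2 + cos^2 t <= (E + PI/2 - t)^2]: the logarithmic blow-up of [F]
   as [k -> 1]. *)
Lemma ellF_ge_log (k E p : R) : 0 < E -> 0 < 1 - k ^ 2 <= E ^ 2 -> 0 <= p <= PI / 2 ->
  ln (E + PI / 2) - ln (E + PI / 2 - p) <= ellF p k.
Proof.
  intros HE Hk Hp. set (m := sqrt (1 - k ^ 2)).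
  assert (Hm : 0 < m) by (apply sqrt_lt_R0; lra).
  assert (Hkm : k ^ 2 <= 1 - m ^ 2) by (unfold m; rewrite pow2_sqrt; lra).
  rewrite <- RInt_inv_sub, ellF_fold by lra.
  apply RInt_le; [lra | | now apply (ex_RInt_ellF_integrand _ m) |].
  - apply (@ex_RInt_continuous R_CompleteNormedModule). intros t Ht.
    rewrite Rmin_left, Rmax_right in Ht by lra.
    apply (@ex_derive_continuous R_AbsRing R_NormedModule). auto_derive. lra.
  - intros t Ht. pose proof (cos_le_PI2_sub t ltac:(lra)) as Hcos.
    pose proof (ellF_radicand_bounds k m Hkm t) as Hrad.
    assert (Hsq : 1 - k ^ 2 * sin t ^ 2 <= (E + PI / 2 - t) ^ 2).
    { assert (Hs : sin t ^ 2 = 1 - cos t ^ 2).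
      { pose proof (sin2_cos2 t) as Hpyth. unfold Rsqr in Hpyth. simpl. lra. }
      assert (0 <= k ^ 2 <= 1) by nra.
      assert (cos t ^ 2 <= (PI / 2 - t) ^ 2) by (apply pow_incr; lra).
      assert (k ^ 2 * cos t ^ 2 <= (PI / 2 - t) ^ 2).
      { apply Rle_trans with (cos t ^ 2); [| lra].
        rewrite <- (Rmult_1_l (cos t ^ 2)) at 2. apply Rmult_le_compat_r; nra. }
      assert (0 <= E * (PI / 2 - t)) by (apply Rmult_le_pos; lra).
      rewrite Hs. nra. }
    pose proof (pow_lt m 2 Hm). unfold ellF_integrand.
    apply Rinv_le_contravar; [apply sqrt_lt_R0; lra |].
    rewrite <- (sqrt_pow2 (E + PI / 2 - t)) by lra. now apply sqrt_le_1_alt.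
Qed.

Section Ellipse.

Variables a b : R.
Hypothesis b_pos : 0 < b.
Hypothesis b_lt_a : b < a.

(* [k_lam] and [omega_lam] at [lam = b sin p], so that [asin (lam / b) = p]. *)
Definition k_angle (p : R) : R := k_lam a b (b * sin p).
Definition omega_angle (p : R) : R := ellF p (k_angle p) / (2 * ellK (k_angle p)).

Lemma focal_denominator_bounds (p : R) :
  0 < a ^ 2 - b ^ 2 <= a ^ 2 - (b * sin p) ^ 2 /\ a ^ 2 - (b * sin p) ^ 2 <= a ^ 2.
Proof. pose proof (sin_pow2_bound p). assert (0 < b ^ 2) by nra. repeat split; nra. Qed.

Lemma k_angle_pow2 (p : R) : k_angle p ^ 2 = (a ^ 2 - b ^ 2) / (a ^ 2 - (b * sin p) ^ 2).
Proof.
  destruct (focal_denominator_bounds p). apply pow2_sqrt, Rdiv_le_0_compat; lra.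
Qed.

Lemma k_angle_nonneg (p : R) : 0 <= k_angle p.
Proof. apply sqrt_pos. Qed.

Lemma one_sub_k_angle_pow2 (p : R) :
  1 - k_angle p ^ 2 = b ^ 2 * cos p ^ 2 / (a ^ 2 - (b * sin p) ^ 2).
Proof.
  destruct (focal_denominator_bounds p). rewrite k_angle_pow2.
  pose proof (sin2_cos2 p) as Hpyth. unfold Rsqr in Hpyth. field_simplify_eq; [nra | lra].
Qed.

Lemma k_angle_pow2_le (p d : R) : 0 <= d <= cos p -> k_angle p ^ 2 <= 1 - (b * d / a) ^ 2.
Proof.
  intros Hd. destruct (focal_denominator_bounds p).
  enough ((b * d / a) ^ 2 <= 1 - k_angle p ^ 2) by lra.
  rewrite one_sub_k_angle_pow2.
  replace ((b * d / a) ^ 2) with (b ^ 2 * d ^ 2 / a ^ 2) by (field; lra).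
  apply Rle_trans with (b ^ 2 * cos p ^ 2 / a ^ 2).
  - apply Rmult_le_compat_r; [apply Rlt_le, Rinv_0_lt_compat; nra |].
    apply Rmult_le_compat_l; [nra | apply pow_incr; lra].
  - apply Rmult_le_compat_l; [nra | apply Rinv_le_contravar; lra].
Qed.

Lemma k_angle_continuity : continuity k_angle.
Proof.
  intros p. apply continuity_pt_filterlim.
  destruct (focal_denominator_bounds p).
  apply (@ex_derive_continuous R_AbsRing R_NormedModule). unfold k_angle, k_lam.
  auto_derive. repeat split; [lra | apply Rdiv_lt_0_compat; lra].
Qed.

(* Chosen so that [cos p <= omega_threshold] forces [ellF p (k_angle p) >= 6 a / b + 1],
   more than twice the tail [ellK - ellF p], which is at most [3 a / b]. *)
Definition omega_threshold : R :=
  PI / 2 * exp (- (6 * a / b + 1)) / (b / sqrt (a ^ 2 - b ^ 2) + 3).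

Lemma omega_threshold_bounds : 0 < omega_threshold < 1.
Proof.
  unfold omega_threshold. pose proof PI_4. pose proof PI_RGT_0.
  assert (0 < b / sqrt (a ^ 2 - b ^ 2))
    by (apply Rdiv_lt_0_compat; [lra | apply sqrt_lt_R0; nra]).
  assert (exp (- (6 * a / b + 1)) < 1).
  { rewrite <- exp_0 at 2. apply exp_increasing.
    assert (0 < 6 * a / b) by (apply Rdiv_lt_0_compat; lra). lra. }
  pose proof (exp_pos (- (6 * a / b + 1))).
  split; [apply Rdiv_lt_0_compat; nra |].
  apply Rmult_lt_reg_r with (b / sqrt (a ^ 2 - b ^ 2) + 3); [lra |].
  unfold Rdiv at 1. rewrite Rmult_assoc, Rinv_l by lra. nra.
Qed.

Lemma ellK_sub_ellF_angle_le (p : R) : 0 < p < PI / 2 ->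
  0 <= ellK (k_angle p) - ellF p (k_angle p) <= 3 * a / b.
Proof.
  intros Hp. assert (Hcos : 0 < cos p) by (apply cos_gt_0; lra).
  set (m1 := b * cos p / a).
  assert (Hm1 : 0 < m1) by (apply Rdiv_lt_0_compat; nra).
  pose proof (k_angle_pow2_le p (cos p) ltac:(lra)) as Hk.
  destruct (ellF_sub_bounds (k_angle p) m1 Hm1 Hk p (PI / 2) ltac:(lra)) as [Hlo Hhi].
  pose proof (PI2_sub_le_3cos p ltac:(lra)).
  unfold ellK. split; [lra |]. apply Rle_trans with ((PI / 2 - p) / m1); [exact Hhi |].
  replace (3 * a / b) with (3 * cos p / m1) by (unfold m1; field; lra).
  apply Rmult_le_compat_r; [apply Rlt_le, Rinv_0_lt_compat |]; lra.
Qed.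

Lemma ellF_angle_ge (p : R) : 0 < p < PI / 2 -> cos p <= omega_threshold ->
  6 * a / b + 1 <= ellF p (k_angle p).
Proof.
  intros Hp Hthr. pose proof PI_RGT_0.
  assert (Hcos : 0 < cos p) by (apply cos_gt_0; lra).
  destruct (focal_denominator_bounds p).
  set (c := sqrt (a ^ 2 - b ^ 2)) in Hthr.
  assert (Hc : 0 < c) by (apply sqrt_lt_R0; lra).
  assert (Ec : c ^ 2 = a ^ 2 - b ^ 2) by (apply pow2_sqrt; lra).
  set (E := b * cos p / c).
  assert (HE : 0 < E) by (apply Rdiv_lt_0_compat; nra).
  assert (Hk : 0 < 1 - k_angle p ^ 2 <= E ^ 2).
  { rewrite one_sub_k_angle_pow2. unfold E.
    replace ((b * cos p / c) ^ 2) with (b ^ 2 * cos p ^ 2 / c ^ 2) by (field; lra).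
    assert (0 < b ^ 2 * cos p ^ 2) by (apply Rmult_lt_0_compat; apply pow_lt; lra).
    rewrite Ec. split; [apply Rdiv_lt_0_compat; lra |].
    apply Rmult_le_compat_l; [nra | apply Rinv_le_contravar; lra]. }
  pose proof (ellF_ge_log (k_angle p) E p HE Hk ltac:(lra)).
  assert (Hshift : E + PI / 2 - p <= PI / 2 * exp (- (6 * a / b + 1))).
  { pose proof (PI2_sub_le_3cos p ltac:(lra)).
    assert (0 < b / c) by (apply Rdiv_lt_0_compat; lra).
    apply Rle_trans with ((b / c + 3) * cos p); [unfold E, Rdiv; nra |].
    unfold omega_threshold in Hthr. fold c in Hthr.
    apply Rmult_le_compat_l with (r := b / c + 3) in Hthr; [| lra].
    replace ((b / c + 3) * (PI / 2 * exp (- (6 * a / b + 1)) / (b / c + 3)))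
      with (PI / 2 * exp (- (6 * a / b + 1))) in Hthr by (field; lra).
    exact Hthr. }
  assert (ln (PI / 2) <= ln (E + PI / 2)) by (apply ln_le; lra).
  assert (Hln : ln (E + PI / 2 - p) <= ln (PI / 2 * exp (- (6 * a / b + 1))))
    by (apply ln_le; lra).
  rewrite ln_mult, ln_exp in Hln by (try apply exp_pos; lra).
  lra.
Qed.

Lemma omega_angle_gt_third (p : R) : 0 < p < PI / 2 -> cos p <= omega_threshold ->
  1 / 3 < omega_angle p.
Proof.
  intros Hp Hthr. pose proof (ellF_angle_ge p Hp Hthr). pose proof (ellK_sub_ellF_angle_le p Hp).
  assert (0 < a / b) by (apply Rdiv_lt_0_compat; lra).
  unfold omega_angle. set (F := ellF p (k_angle p)) in *. set (K := ellK (k_angle p)) in *.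
  apply Rmult_lt_reg_r with (3 * (2 * K)); [lra |].
  replace (F / (2 * K) * (3 * (2 * K))) with (3 * F) by (field; lra). lra.
Qed.

Definition modulus_margin : R := b * omega_threshold / a.

Lemma modulus_margin_pos : 0 < modulus_margin.
Proof. pose proof omega_threshold_bounds. apply Rdiv_lt_0_compat; nra. Qed.

Lemma acos_omega_threshold_bounds : 0 < acos omega_threshold < PI / 2.
Proof.
  pose proof omega_threshold_bounds. pose proof (acos_bound_lt omega_threshold ltac:(lra)).
  split; [lra |]. destruct (Rlt_dec (acos omega_threshold) (PI / 2)) as [| Hge]; auto.
  pose proof (cos_le_0 (acos omega_threshold) ltac:(lra) ltac:(lra)) as Hcos.
  rewrite cos_acos in Hcos; lra.
Qed.

Lemma k_angle_margin (p : R) : 0 <= p <= acos omega_threshold ->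
  k_angle p ^ 2 <= 1 - modulus_margin ^ 2.
Proof.
  intros Hp. pose proof omega_threshold_bounds. pose proof acos_omega_threshold_bounds.
  apply k_angle_pow2_le. split; [lra |].
  rewrite <- (cos_acos omega_threshold) by lra.
  apply cos_decr_1; pose proof PI_RGT_0; lra.
Qed.

(* [IVT_gen] wants a function continuous everywhere; clamping the angle to the region where the
   modulus stays away from 1 provides one. *)
Lemma omega_angle_clamp_continuity :
  continuity (fun x => omega_angle (clamp 0 (acos omega_threshold) x)).
Proof.
  pose proof acos_omega_threshold_bounds. pose proof PI_RGT_0.
  set (P := clamp 0 (acos omega_threshold)).
  assert (HP : forall x, 0 <= P x <= acos omega_threshold) by (intros; apply clamp_bounds; lra).
  assert (Hbound : forall Q : R -> R, (forall x, 0 <= Q x) -> forall x,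
    0 <= Q x /\ 0 <= k_angle (P x) /\ k_angle (P x) ^ 2 <= 1 - modulus_margin ^ 2).
  { intros Q HQ x. repeat split; [apply HQ | apply k_angle_nonneg | apply k_angle_margin, HP]. }
  intros x0.
  assert (Hk : continuity_pt (fun x => k_angle (P x)) x0).
  { apply (continuity_pt_comp P k_angle); [apply clamp_continuity | apply k_angle_continuity]. }
  assert (HF : continuity_pt (fun x => ellF (P x) (k_angle (P x))) x0).
  { apply (continuity_pt_ellF_comp modulus_margin P _ x0 modulus_margin_pos);
      [apply Hbound; intros; apply HP | apply clamp_continuity | exact Hk]. }
  assert (HK : continuity_pt (fun x => 2 * ellK (k_angle (P x))) x0).
  { apply (continuity_pt_scal (fun x => ellK (k_angle (P x)))).
    apply (continuity_pt_ellF_comp modulus_margin (fun _ => PI / 2) _ x0 modulus_margin_pos);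
      [apply Hbound; intros; lra | apply continuity_pt_const; intros u v; reflexivity | exact Hk]. }
  apply (continuity_pt_div _ _ x0 HF HK).
  pose proof (ellK_bounds _ _ modulus_margin_pos (k_angle_margin (P x0) (HP x0))). lra.
Qed.

Lemma omega_angle_solution (q : R) : 3 <= q ->
  exists p, 0 < p < PI / 2 /\ omega_angle p = 1 / q.
Proof.
  intros Hq. pose proof PI_RGT_0. pose proof acos_omega_threshold_bounds.
  pose proof modulus_margin_pos as Hm. pose proof omega_threshold_bounds.
  set (p2 := acos omega_threshold) in *.
  set (p1 := Rmin (PI * modulus_margin / (2 * q)) (p2 / 2)).
  assert (Hp1 : 0 < p1 <= PI * modulus_margin / (2 * q) /\ p1 < p2).
  { unfold p1. pose proof (Rmin_l (PI * modulus_margin / (2 * q)) (p2 / 2)).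
    pose proof (Rmin_r (PI * modulus_margin / (2 * q)) (p2 / 2)).
    repeat split; try lra. apply Rmin_glb_lt; [apply Rdiv_lt_0_compat; nra | lra]. }
  set (h := fun x => omega_angle (clamp 0 p2 x)).
  assert (Hh1 : h p1 < 1 / q).
  { unfold h. rewrite clamp_id by lra.
    eapply Rle_lt_trans.
    - apply (ellF_div_ellK_le _ modulus_margin Hm (k_angle_margin p1 ltac:(fold p2; lra))). lra.
    - apply Rle_lt_trans with (1 / (2 * q)).
      + replace (1 / (2 * q)) with (PI * modulus_margin / (2 * q) / (modulus_margin * PI))
          by (field; lra).
        apply Rmult_le_compat_r; [apply Rlt_le, Rinv_0_lt_compat; nra | lra].
      + apply Rmult_lt_compat_l; [lra | apply Rinv_lt_contravar; nra]. }
  assert (Hh2 : 1 / q < h p2).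
  { unfold h. rewrite clamp_id by lra.
    apply Rle_lt_trans with (1 / 3).
    - apply Rmult_le_compat_l; [lra | apply Rinv_le_contravar; lra].
    - apply omega_angle_gt_third; [lra |]. unfold p2. rewrite cos_acos; lra. }
  destruct (IVT_gen h p1 p2 (1 / q) omega_angle_clamp_continuity) as [x [Hx Hhx]].
  - split; [apply Rle_trans with (h p1); [apply Rmin_l | lra]
           | apply Rle_trans with (h p2); [lra | apply Rmax_r]].
  - rewrite Rmin_left, Rmax_right in Hx by lra.
    exists x. unfold h in Hhx. rewrite clamp_id in Hhx by lra. split; [lra | exact Hhx].
Qed.

Lemma lam_q_spec (q : nat) : (3 <= q)%nat ->
  0 < lam_q a b q < b /\ omega_lam a b (lam_q a b q) = 1 / INR q.
Proof.
  intros Hq.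
  apply (epsilon_spec (inhabits 0) (fun lam => 0 < lam < b /\ omega_lam a b lam = 1 / INR q)).
  destruct (omega_angle_solution (INR q) (INR_ge_3 q Hq)) as [p [Hp Hw]].
  assert (0 < sin p) by (apply sin_gt_0; lra).
  assert (sin p < 1) by (rewrite <- sin_PI2; apply sin_increasing_1; lra).
  exists (b * sin p). split; [split; nra |].
  unfold omega_lam. replace (b * sin p / b) with (sin p) by (field; lra).
  rewrite asin_sin by lra. exact Hw.
Qed.

Lemma lam_q_angle (q : nat) : (3 <= q)%nat -> exists p,
  0 < p < PI / 2 /\ omega_threshold < cos p /\ lam_q a b q = b * sin p /\
  omega_angle p = 1 / INR q.
Proof.
  intros Hq. destruct (lam_q_spec q Hq) as [Hl Hw]. pose proof (INR_ge_3 q Hq).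
  set (l := lam_q a b q) in *. set (p := asin (l / b)).
  assert (Hlb : 0 < l / b < 1).
  { split; [apply Rdiv_lt_0_compat; lra |].
    apply Rmult_lt_reg_r with b; [lra |]. unfold Rdiv. rewrite Rmult_assoc, Rinv_l; lra. }
  assert (Hs : sin p = l / b) by (apply sin_asin; lra).
  assert (Hp : 0 < p < PI / 2).
  { pose proof (asin_bound_lt (l / b) ltac:(lra)) as Hbound. fold p in Hbound. split; [| lra].
    destruct (Rtotal_order p 0) as [Hneg | [Hzero | Hpos]]; auto.
    - pose proof (sin_lt_0_var p ltac:(lra) Hneg). lra.
    - rewrite Hzero, sin_0 in Hs. lra. }
  assert (El : l = b * sin p) by (rewrite Hs; field; lra).
  assert (Hwp : omega_angle p = 1 / INR q).
  { unfold omega_angle, k_angle. rewrite <- El. exact Hw. }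
  exists p. repeat split; auto; try lra.
  destruct (Rlt_le_dec omega_threshold (cos p)) as [| Hle]; auto.
  pose proof (omega_angle_gt_third p Hp Hle).
  assert (1 / INR q <= 1 / 3) by (apply Rmult_le_compat_l; [lra | apply Rinv_le_contravar; lra]).
  lra.
Qed.

Lemma k_q_margin (q : nat) : (3 <= q)%nat -> k_q a b q ^ 2 <= 1 - modulus_margin ^ 2.
Proof.
  intros Hq. destruct (lam_q_angle q Hq) as [p [Hp [Hc [El _]]]].
  unfold k_q. rewrite El. apply k_angle_pow2_le. pose proof omega_threshold_bounds. lra.
Qed.

Lemma lam_q_le (q : nat) : (3 <= q)%nat ->
  lam_q a b q <= b * PI / (modulus_margin * INR q).
Proof.
  intros Hq. destruct (lam_q_angle q Hq) as [p [Hp [Hc [El Hw]]]].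
  pose proof (INR_ge_3 q Hq). pose proof modulus_margin_pos as Hm.
  assert (Hk : k_angle p ^ 2 <= 1 - modulus_margin ^ 2).
  { apply k_angle_pow2_le. pose proof omega_threshold_bounds. lra. }
  pose proof (ellF_bounds _ _ Hm Hk p ltac:(lra)).
  pose proof (ellK_bounds _ _ Hm Hk).
  unfold omega_angle in Hw.
  assert (EF : ellF p (k_angle p) = 2 * ellK (k_angle p) * (1 / INR q))
    by (rewrite <- Hw; field; lra).
  assert (Hpq : p <= PI / (modulus_margin * INR q)).
  { replace (PI / (modulus_margin * INR q)) with (2 * (PI / 2 / modulus_margin) * (1 / INR q))
      by (field; lra).
    apply Rle_trans with (ellF p (k_angle p)); [lra |]. rewrite EF.
    apply Rmult_le_compat_r; [apply Rdiv_le_0_compat |]; lra. }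
  rewrite El.
  replace (b * PI / (modulus_margin * INR q)) with (b * (PI / (modulus_margin * INR q)))
    by (field; lra).
  apply Rmult_le_compat_l; [lra |]. pose proof (sin_lt_x p ltac:(lra)). lra.
Qed.

Lemma ecc_pow2 : ecc a b ^ 2 = (a ^ 2 - b ^ 2) / a ^ 2 /\ 0 < ecc a b.
Proof.
  unfold ecc. assert (b ^ 2 / a ^ 2 < 1).
  { apply Rmult_lt_reg_r with (a ^ 2); [nra |].
    unfold Rdiv. rewrite Rmult_assoc, Rinv_l by nra. nra. }
  split; [rewrite pow2_sqrt by lra; field; lra | apply sqrt_lt_R0; lra].
Qed.

Lemma k_q_sub_ecc_bounds (q : nat) : (3 <= q)%nat ->
  0 <= k_q a b q - ecc a b <= lam_q a b q ^ 2 / (a ^ 2 * ecc a b).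
Proof.
  intros Hq. destruct (lam_q_spec q Hq) as [Hl _]. destruct ecc_pow2 as [Ee He].
  set (l := lam_q a b q) in *. set (e := ecc a b) in *. set (k := k_q a b q).
  assert (Ek : k ^ 2 = (a ^ 2 - b ^ 2) / (a ^ 2 - l ^ 2)).
  { apply pow2_sqrt, Rdiv_le_0_compat; nra. }
  assert (Hk0 : 0 <= k) by apply sqrt_pos.
  assert (Hden : a ^ 2 - b ^ 2 <= a ^ 2 - l ^ 2 < a ^ 2) by nra.
  assert (Hsq : 0 <= k ^ 2 - e ^ 2 <= l ^ 2 / a ^ 2).
  { rewrite Ee, Ek.
    replace ((a ^ 2 - b ^ 2) / (a ^ 2 - l ^ 2) - (a ^ 2 - b ^ 2) / a ^ 2)
      with ((a ^ 2 - b ^ 2) / (a ^ 2 - l ^ 2) * (l ^ 2 / a ^ 2)) by (field; nra).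
    assert (0 <= (a ^ 2 - b ^ 2) / (a ^ 2 - l ^ 2) <= 1).
    { split; [apply Rdiv_le_0_compat; nra |].
      apply Rmult_le_reg_r with (a ^ 2 - l ^ 2); [nra |].
      unfold Rdiv. rewrite Rmult_assoc, Rinv_l; nra. }
    assert (0 <= l ^ 2 / a ^ 2) by (apply Rdiv_le_0_compat; nra).
    split; [apply Rmult_le_pos |]; nra. }
  assert (He_k : e <= k) by nra.
  split; [lra |].
  apply Rmult_le_reg_r with e; [lra |].
  replace (l ^ 2 / (a ^ 2 * e) * e) with (l ^ 2 / a ^ 2) by (field; nra).
  nra.
Qed.

Lemma k_q_sub_ecc_le (q : nat) : (3 <= q)%nat ->
  Rabs (k_q a b q - ecc a b)
    <= (b * PI / modulus_margin) ^ 2 / (a ^ 2 * ecc a b) / INR q ^ 2.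
Proof.
  intros Hq. pose proof (k_q_sub_ecc_bounds q Hq). pose proof (lam_q_le q Hq).
  destruct (lam_q_spec q Hq) as [Hl _]. destruct ecc_pow2 as [_ He].
  pose proof (INR_ge_3 q Hq). pose proof modulus_margin_pos.
  rewrite Rabs_pos_eq by lra.
  replace ((b * PI / modulus_margin) ^ 2 / (a ^ 2 * ecc a b) / INR q ^ 2)
    with ((b * PI / (modulus_margin * INR q)) ^ 2 / (a ^ 2 * ecc a b))
    by (field; repeat split; lra).
  apply Rle_trans with (lam_q a b q ^ 2 / (a ^ 2 * ecc a b)); [lra |].
  apply Rmult_le_compat_r; [apply Rlt_le, Rinv_0_lt_compat, Rmult_lt_0_compat; nra |].
  apply pow_incr. lra.
Qed.

End Ellipse.

Definition inv_sq_bounds (a b M : R) : Prop :=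
  forall q : nat, (3 <= q)%nat ->
    Rabs (k_q a b q - ecc a b) <= M / INR q ^ 2 /\
    forall xi : R, 0 <= xi < 2 * PI ->
      Rabs (xi_q a b q (phi_inf a b xi) - xi) <= M / INR q ^ 2.

Lemma inv_sq_bounds_le (a b M M' : R) : M <= M' -> inv_sq_bounds a b M -> inv_sq_bounds a b M'.
Proof.
  intros HM HB q Hq. pose proof (INR_ge_3 q Hq).
  assert (M / INR q ^ 2 <= M' / INR q ^ 2).
  { apply Rmult_le_compat_r; [apply Rlt_le, Rinv_0_lt_compat, pow_lt |]; lra. }
  destruct (HB q Hq) as [Hk Hxi]. split; [lra |].
  intros xi Hxi'. specialize (Hxi xi Hxi'). lra.
Qed.

Lemma inv_sq_bounds_circle (b M : R) : 0 < b -> 0 <= M -> inv_sq_bounds b b M.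
Proof.
  intros Hb HM q Hq. pose proof (INR_ge_3 q Hq). pose proof PI_RGT_0.
  assert (HMq : 0 <= M / INR q ^ 2) by (apply Rdiv_le_0_compat; [| apply pow_lt]; lra).
  assert (Ek : k_q b b q = 0).
  { unfold k_q, k_lam. rewrite Rminus_diag. unfold Rdiv. rewrite Rmult_0_l. apply sqrt_0. }
  assert (Ee : ecc b b = 0).
  { unfold ecc. replace (1 - b ^ 2 / b ^ 2) with 0 by (field; lra). apply sqrt_0. }
  split; [rewrite Ek, Ee, Rminus_0_r, Rabs_R0; exact HMq |].
  intros xi Hxi. unfold xi_q, phi_inf. rewrite Ek, Ee. unfold ellK. rewrite !ellF_modulus0.
  pose proof (ellF_am 1 0 (4 * (PI / 2) / (2 * PI) * xi) Rlt_0_1 ltac:(lra)) as Ham.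
  rewrite ellF_modulus0 in Ham. rewrite Ham.
  replace (2 * PI / (4 * (PI / 2)) * (4 * (PI / 2) / (2 * PI) * xi) - xi) with 0 by (field; lra).
  rewrite Rabs_R0. exact HMq.
Qed.

Lemma inv_sq_bounds_exists (a b : R) : 0 < b < a -> exists M, inv_sq_bounds a b M.
Proof.
  intros Hab. pose proof PI_RGT_0.
  pose proof (modulus_margin_pos a b ltac:(lra) ltac:(lra)) as Hm.
  set (m := modulus_margin a b) in *.
  set (M1 := (b * PI / m) ^ 2 / (a ^ 2 * ecc a b)).
  assert (Hfac : 0 <= 4 * PI / m ^ 4) by (apply Rdiv_le_0_compat; [| apply pow_lt]; lra).
  exists (M1 + 4 * PI / m ^ 4 * M1).
  intros q Hq. pose proof (INR_ge_3 q Hq).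
  pose proof (k_q_sub_ecc_le a b ltac:(lra) ltac:(lra) q Hq) as Hk. fold m M1 in Hk.
  assert (HM1 : 0 <= M1 / INR q ^ 2) by (eapply Rle_trans; [apply Rabs_pos | exact Hk]).
  replace ((M1 + 4 * PI / m ^ 4 * M1) / INR q ^ 2)
    with (M1 / INR q ^ 2 + 4 * PI / m ^ 4 * (M1 / INR q ^ 2)) by (field; lra).
  split.
  - pose proof (Rmult_le_pos _ _ Hfac HM1). lra.
  - intros xi Hxi. unfold xi_q, phi_inf.
    destruct (k_q_sub_ecc_bounds a b ltac:(lra) ltac:(lra) q Hq).
    pose proof (k_q_margin a b ltac:(lra) ltac:(lra) q Hq) as Hkm. fold m in Hkm.
    destruct (ecc_pow2 a b ltac:(lra) ltac:(lra)) as [_ He].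
    assert (Hk0 : 0 <= k_q a b q) by apply sqrt_pos.
    assert (He2 : ecc a b ^ 2 <= 1 - m ^ 2) by nra.
    eapply Rle_trans; [apply (xi_error_le _ _ m); auto; lra |].
    pose proof (Rmult_le_compat_l _ _ _ Hfac Hk). lra.
Qed.

Lemma ellipse_of_ecc_semifocal (a b : R) : 0 < b < a ->
  semifocal a b / ecc a b = a /\
  sqrt ((semifocal a b / ecc a b) ^ 2 - semifocal a b ^ 2) = b.
Proof.
  intros Hab. destruct (ecc_pow2 a b ltac:(lra) ltac:(lra)) as [Ee He].
  assert (Ec : semifocal a b = ecc a b * a).
  { unfold semifocal. rewrite <- (sqrt_pow2 (ecc a b * a)) by nra. f_equal.
    rewrite Rpow_mult_distr, Ee. field. lra. }
  assert (Ea : semifocal a b / ecc a b = a) by (rewrite Ec; field; lra).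
  split; [exact Ea |]. rewrite Ea. unfold semifocal. rewrite pow2_sqrt by nra.
  replace (a ^ 2 - (a ^ 2 - b ^ 2)) with (b ^ 2) by ring. apply sqrt_pow2. lra.
Qed.

Theorem lemma9 :
  exists C : R -> R -> R,
    forall a b : R, 0 < b -> b <= a ->
    forall q : nat, (3 <= q)%nat ->
      Rabs (k_q a b q - ecc a b) <= C (ecc a b) (semifocal a b) / (INR q) ^ 2 /\
      forall xi : R, 0 <= xi < 2 * PI ->
        Rabs (xi_q a b q (phi_inf a b xi) - xi)
          <= C (ecc a b) (semifocal a b) / (INR q) ^ 2.
Proof.
  exists (fun e c => Rabs (epsilon (inhabits 0)
                            (inv_sq_bounds (c / e) (sqrt ((c / e) ^ 2 - c ^ 2))))).
  intros a b Hb Hab.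
  change (inv_sq_bounds a b (Rabs (epsilon (inhabits 0) (inv_sq_bounds
    (semifocal a b / ecc a b) (sqrt ((semifocal a b / ecc a b) ^ 2 - semifocal a b ^ 2)))))).
  destruct (Req_dec a b) as [<- | Hne].
  - apply inv_sq_bounds_circle; [exact Hb | apply Rabs_pos].
  - destruct (ellipse_of_ecc_semifocal a b ltac:(lra)) as [-> ->].
    apply inv_sq_bounds_le with (epsilon (inhabits 0) (inv_sq_bounds a b)); [apply Rle_abs |].
    apply epsilon_spec, inv_sq_bounds_exists. lra.
Qed.
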